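(* Let $\mathcal E:\mathbb R^d\to\mathbb R$ be positive and bounded, with $\underline{\mathcal E}:=\inf\mathcal E$, $\overline{\mathcal E}:=\sup\mathcal E$, and for $\beta>0$ let $\gamma_\beta^{\mathcal E}(v,v_* ):=\frac{e^{-\beta\mathcal E(v_* )}}{e^{-\beta\mathcal E(v)}+e^{-\beta\mathcal E(v_* )}}$ and $C_{\beta,\mathcal E}:=e^{\beta(\overline{\mathcal E}-\underline{\mathcal E})}$. Then for any $\beta>0$ there is a constant $\xi_\beta^{\mathcal E}\in(0,1)$ such that for all $v,v_*\in\mathbb R^d$ $$\big(\gamma_\beta^{\mathcal E}(v,v_* )\big)^2\le \xi_\beta^{\mathcal E}\,\gamma_{2\beta}^{\mathcal E}(v,v_* ),$$ and moreover $1-\xi_\beta^{\mathcal E}\ge (C_{\beta,\mathcal E})^{-1}$ if $\beta$ is sufficiently large. *)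

From mathcomp Require Import all_boot all_order all_algebra.
From mathcomp Require Import classical_sets reals.
From mathcomp Require Import sequences.
From mathcomp.analysis Require Import exp.
Set Implicit Arguments. Unset Strict Implicit. Unset Printing Implicit Defensive.
Import Order.TTheory GRing.Theory Num.Theory.
Local Open Scope ring_scope.
Local Open Scope classical_set_scope.

Definition gammaE (R : realType) (d : nat) (E : 'rV[R]_d -> R) (beta : R)
  (v vs : 'rV[R]_d) : R :=
  expR (- (beta * E vs)) / (expR (- (beta * E v)) + expR (- (beta * E vs))).

Definition Esup (R : realType) (d : nat) (E : 'rV[R]_d -> R) : R := sup (range E).
Definition Einf (R : realType) (d : nat) (E : 'rV[R]_d -> R) : R := inf (range E).

Definition CbE (R : realType) (d : nat) (E : 'rV[R]_d -> R) (beta : R) : R :=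
  expR (beta * (Esup E - Einf E)).

From mathcomp Require Import all_boot all_order all_algebra.
From mathcomp Require Import classical_sets reals.
From mathcomp Require Import sequences.
From mathcomp.analysis Require Import exp.
From mathcomp Require Import ring lra.
Set Implicit Arguments.
Unset Strict Implicit.
Import Order.TTheory GRing.Theory Num.Theory.
Local Open Scope ring_scope.

(* Write a = e^{-beta E(v)}, b = e^{-beta E(v_* )} and C = C_{beta,E}, so that
   a <= C b and b <= C a.  Then gamma_beta = b/(a+b), gamma_{2 beta} = b^2/(a^2+b^2)
   and gamma_beta^2 = (1 - 2ab/(a+b)^2) gamma_{2 beta}.  The ratio a/b lies in
   [1/C, C], where t/(1+t)^2 is smallest at the endpoints, so 2ab/(a+b)^2 is at
   least 2C/(1+C)^2 and xi := 1 - 2C/(1+C)^2 works.  Since 1 - xi ~ 2/C as C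
   grows, 1 - xi >= 1/C once C >= 3, which holds for large beta when E is not
   constant. *)

Definition xiC (R : realFieldType) (C : R) : R := 1 - 2 * C / (1 + C) ^+ 2.

Section ContractionConstant.
Variable R : realFieldType.
Implicit Types a b C : R.

Lemma xiC_in01 C : 0 < C -> 0 < xiC C < 1.
Proof.
move=> C0; have sqr_gt0 : 0 < (1 + C) ^+ 2 by apply: exprn_gt0; lra.
rewrite /xiC; apply/andP; split.
  by rewrite subr_gt0 ltr_pdivrMr // mul1r; nra.
by rewrite ltrBlDr ltrDl; apply: divr_gt0; lra.
Qed.

Lemma C_mul_sqrD_le a b C : a <= C * b -> b <= C * a ->
  C * (a + b) ^+ 2 <= a * b * (1 + C) ^+ 2.
Proof.
move=> abC baC.
have -> : a * b * (1 + C) ^+ 2 = C * (a + b) ^+ 2 + (C * a - b) * (C * b - a)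
  by ring.
by rewrite lerDl; apply: mulr_ge0; lra.
Qed.

Lemma sqr_weight_le_xiC a b C : 0 < a -> 0 < b -> a <= C * b -> b <= C * a ->
  (b / (a + b)) ^+ 2 <= xiC C * (b ^+ 2 / (a ^+ 2 + b ^+ 2)).
Proof.
move=> a0 b0 abC baC.
have ab0 : 0 < a + b by lra.
have C0 : 0 < C by nra.
have -> : (b / (a + b)) ^+ 2
    = (1 - 2 * (a * b) / (a + b) ^+ 2) * (b ^+ 2 / (a ^+ 2 + b ^+ 2)).
  by field; apply/andP; split; apply/lt0r_neq0; nra.
apply: ler_wpM2r; first by apply: divr_ge0; nra.
have sqrC_gt0 : 0 < (1 + C) ^+ 2 by apply: exprn_gt0; lra.
have sqrab_gt0 : 0 < (a + b) ^+ 2 by exact: exprn_gt0.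
rewrite lerD2l lerN2 ler_pdivrMr // mulrAC ler_pdivlMr //.
rewrite -!mulrA ler_pM2l //.
by rewrite mulrA; exact: C_mul_sqrD_le abC baC.
Qed.

Lemma inv_le_1_sub_xiC C : 3 <= C -> C^-1 <= 1 - xiC C.
Proof.
move=> C3; have C0 : 0 < C by lra.
have sqrC_gt0 : 0 < (1 + C) ^+ 2 by apply: exprn_gt0; lra.
by rewrite /xiC opprB addrC subrK ler_pdivlMr // ler_pdivrMl //; nra.
Qed.

End ContractionConstant.

Section GibbsWeights.
Variables (R : realType) (d : nat) (E : 'rV[R]_d -> R).
Hypotheses (E_ub : has_ubound (range E)) (E_lb : has_lbound (range E)).

Lemma E_le_Esup v : E v <= Esup E.
Proof. by apply: ub_le_sup => //; exists v. Qed.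

Lemma Einf_le_E v : Einf E <= E v.
Proof. by apply: ge_inf => //; exists v. Qed.

Lemma Einf_le_Esup : Einf E <= Esup E.
Proof. exact: le_trans (Einf_le_E 0) (E_le_Esup 0). Qed.

Lemma Einf_lt_Esup v w : E v != E w -> Einf E < Esup E.
Proof.
move=> /eqP Evw; have := Einf_le_E v; have := E_le_Esup v.
have := Einf_le_E w; have := E_le_Esup w.
by case: (ltgtP (E v) (E w)) => // _; lra.
Qed.

Lemma CbE_ge1 beta : 0 <= beta -> 1 <= CbE E beta.
Proof.
move=> beta0; rewrite /CbE -expR0 ler_expR.
by apply: mulr_ge0 => //; rewrite subr_ge0 Einf_le_Esup.
Qed.

Lemma expNE_le_CbE beta v w : 0 <= beta ->
  expR (- (beta * E v)) <= CbE E beta * expR (- (beta * E w)).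
Proof.
move=> beta0; rewrite /CbE -expRD ler_expR.
have := E_le_Esup w; have := Einf_le_E v; nra.
Qed.

Lemma gammaE_double beta v w : gammaE E (2 * beta) v w =
  expR (- (beta * E w)) ^+ 2 /
    (expR (- (beta * E v)) ^+ 2 + expR (- (beta * E w)) ^+ 2).
Proof.
have sqr x : expR (- (2 * beta * E x)) = expR (- (beta * E x)) ^+ 2.
  by rewrite -expRM_natl; congr expR; ring.
by rewrite /gammaE !sqr.
Qed.

End GibbsWeights.

Theorem lemma1 (R : realType) (d : nat) (E : 'rV[R]_d -> R)
  (Epos : forall v, 0 < E v) (Ebdd : exists M : R, forall v, E v <= M) :
  exists xi : R -> R,
    (forall beta : R, 0 < beta ->
       (0 < xi beta < 1) /\
       (forall v vs : 'rV[R]_d,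
          gammaE E beta v vs ^+ 2 <= xi beta * gammaE E (2 * beta) v vs)) /\
    ((exists v w : 'rV[R]_d, E v != E w) ->
     exists beta0 : R, forall beta : R, beta0 <= beta ->
       (CbE E beta)^-1 <= 1 - xi beta).
Proof.
have E_ub : has_ubound (range E) by case: Ebdd => M EM; exists M => _ [v _ <-].
have E_lb : has_lbound (range E) by exists 0 => _ [v _ <-]; exact: ltW.
exists (fun beta => xiC (CbE E beta)); split.
  move=> beta beta0; split.
    by apply: xiC_in01; apply: lt_le_trans ltr01 (CbE_ge1 E_ub E_lb (ltW beta0)).
  have weight_ratio v w := expNE_le_CbE E_ub E_lb v w (ltW beta0).
  move=> v vs; rewrite gammaE_double.
  by apply: sqr_weight_le_xiC; rewrite ?expR_gt0 ?weight_ratio.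
case=> v [w] /(Einf_lt_Esup E_ub E_lb); rewrite -subr_gt0.
set D := Esup E - Einf E => D0.
exists (3 / D) => beta beta_ge; apply: inv_le_1_sub_xiC.
have betaD : 3 <= beta * D by rewrite -ler_pdivrMr.
rewrite /CbE -/D; apply: le_trans _ (expR_ge1Dx _).
by apply: le_trans betaD _; rewrite lerDr.
Qed.
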